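(* Let $n\ge1$, $m\ge2$, $\alpha\in(0,1)$, $\bar g_a>0$, and let $W$ be a real $mn\times mn$ matrix satisfying (S), (A1), (A2), (A3) from the context, with largest eigenvalue $\mu_{\max}(W)$. If $\bar g_a>\alpha(\mu_{\max}(W)-2)$, then $(\bar s,\bar a)=(0,0)$ is the unique equilibrium of the system $$\dot{\bar s}=W\bar f(\bar s)-\bar s-\bar a,\qquad \dot{\bar a}=\bar g_a\bar f(\bar s)-\alpha\bar a,\qquad (\bar s,\bar a)\in\mathbb{R}^{mn}\times\mathbb{R}^{mn}.$$
   Context: For $s\in\mathbb{R}^{mn}$ write $s=(s_{11},\dots,s_{1m},\dots,s_{n1},\dots,s_{nm})^T$. Define $f_{ij}(s)=e^{s_{ij}}/\sum_{l=1}^m e^{s_{il}}$ and $\bar f(s)=f(s)-\frac1m\mathbf 1_{mn}$, where $\mathbf 1_k$ is the all-ones vector in $\mathbb{R}^k$. The matrix $W$ is viewed as an $n\times n$ array of $m\times m$ blocks $W_{i,k}$, and: (S) $W_{i,i}=0$; (A1) $W$ is symmetric; (A2) $W_{i,k}\mathbf 1_m=\lambda_{ik}\mathbf 1_m$ for scalars $\lambda_{ik}$; (A3) $\lambda_{ik}=\lambda_{ki}$. *)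

From mathcomp Require Import all_boot all_order all_algebra.
From mathcomp Require Import reals.
From mathcomp Require Import sequences exp.
Set Implicit Arguments. Unset Strict Implicit. Unset Printing Implicit Defensive.
Import Order.TTheory GRing.Theory Num.Theory.
Local Open Scope ring_scope.

(* Vectors of R^{mn} are column vectors 'cV_(n*m); the entry s_{ij}
   (i : 'I_n the block, j : 'I_m inside the block) sits at index
   bidx i j = mxvec_index i j, i.e. position i*m + j, matching the ordering
   s = (s_11,...,s_1m,...,s_n1,...,s_nm). *)
Definition bidx (n m : nat) (i : 'I_n) (j : 'I_m) : 'I_(n * m) := mxvec_index i j.

Definition softmax (R : realType) (n m : nat) (s : 'cV[R]_(n * m)) : 'cV[R]_(n * m) :=
  \col_k (let M := \matrix_(i < n, j < m) s (bidx i j) 0 in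
          (mxvec (\matrix_(i < n, j < m)
                    (expR (M i j) / \sum_(l < m) expR (M i l)))) 0 k).

Definition fbar (R : realType) (n m : nat) (s : 'cV[R]_(n * m)) : 'cV[R]_(n * m) :=
  softmax s - const_mx (m%:R^-1).

Definition is_equilibrium (R : realType) (n m : nat) (W : 'M[R]_(n * m))
    (ga alpha : R) (s a : 'cV[R]_(n * m)) : Prop :=
  W *m fbar s - s - a = 0 /\ ga *: fbar s - alpha *: a = 0.

Definition is_largest_eigenvalue (R : realType) (k : nat) (W : 'M[R]_k) (mu : R) : Prop :=
  eigenvalue W mu /\ forall a : R, eigenvalue W a -> a <= mu.

From mathcomp Require Import all_boot all_order all_algebra.
From mathcomp Require Import reals normedtype sequences exp derive realfun.
From mathcomp Require Import complex spectral sesquilinear.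
From mathcomp Require Import ring lra.
Set Implicit Arguments.
Unset Strict Implicit.
Unset Printing Implicit Defensive.
Import Order.TTheory GRing.Theory Num.Theory.
Local Open Scope ring_scope.

(** At an equilibrium, [a = (ga / alpha) fbar s] and, writing [g = fbar s],
    [s = W g - (ga / alpha) g].  Blockwise, the softmax satisfies
    [<g, s> >= 2 |g|^2]: on each block, [<g, s>] is the Jeffreys divergence
    between the softmax distribution and the uniform one, which dominates
    twice the squared Euclidean distance by the inequality between the
    logarithmic and arithmetic means and Cauchy-Schwarz.  For symmetric [W] the Rayleigh bound
    [<g, W g> <= mu |g|^2] then gives [2 |g|^2 <= (mu - ga / alpha) |g|^2],
    and [ga / alpha > mu - 2] forces [g = 0], hence [s = a = 0]. *)

Section SoftmaxInequality.
Variable R : realType.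
Import numFieldNormedType.Exports.

Lemma ln_ge_pade (x : R) : 1 <= x -> 2 * (x - 1) / (x + 1) <= ln x.
Proof.
move=> x_ge1.
pose f (t : R) := ln t + 4 * (t + 1)^-1.
have df (t : R) : 0 < t -> is_derive t 1 f (t^-1 - 4 * (t + 1) ^- 2).
  move=> t_gt0; apply: is_derive_eq.
    apply: is_deriveD; first exact: is_derive1_ln.
    by apply: is_deriveZ; apply: is_deriveV; rewrite gt_eqF ?addr_gt0.
  by rewrite /GRing.scale /= addr0 mulr1 mulrN.
have f_ndecr : f 1 <= f x.
  apply: (@ger0_derive1_ndecr _ f 1 x) => //.
  - move=> t; rewrite in_itv /= => /andP[t_gt1 _].
    by have ? := df t (lt_trans ltr01 t_gt1); exact: ex_derive.
  - move=> t; rewrite in_itv /= => /andP[t_gt1 _].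
    have t_gt0 : 0 < t by exact: lt_trans ltr01 t_gt1.
    have ? := df t t_gt0; rewrite derive1E derive_val.
    have -> : t^-1 - 4 * (t + 1) ^- 2 = (t - 1) ^+ 2 / (t * (t + 1) ^+ 2).
      by field; rewrite !gt_eqF ?addr_gt0.
    by rewrite divr_ge0 ?sqr_ge0 // mulr_ge0 ?sqr_ge0 // ltW.
  - apply: derivable_within_continuous => t; rewrite in_itv /= => /andP[t_ge1 _].
    by have ? := df t (lt_le_trans ltr01 t_ge1); exact: ex_derive.
move: f_ndecr; rewrite /f ln1 add0r.
have -> : 4 / (1 + 1) = 2 :> R by field.
have x_gt0 : 0 < x by exact: lt_le_trans ltr01 x_ge1.
have -> : 2 * (x - 1) / (x + 1) = 2 - 4 / (x + 1).
  by field; rewrite gt_eqF ?addr_gt0.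
lra.
Qed.

Lemma lnB_mul_ge (a b : R) : 0 < a -> 0 < b ->
  2 * (a - b) ^+ 2 / (a + b) <= (a - b) * (ln a - ln b).
Proof.
wlog b_le_a : a b / b <= a => [hwlog a_gt0 b_gt0 | a_gt0 b_gt0].
  have [b_le_a | a_lt_b] := leP b a; first exact: hwlog.
  have := hwlog b a (ltW a_lt_b) b_gt0 a_gt0.
  by rewrite [b + a]addrC -[b - a]opprB -[ln b - ln a]opprB sqrrN mulrNN.
have ab_ge1 : 1 <= a / b by rewrite ler_pdivlMr // mul1r.
have a_sub_b_ge0 : 0 <= a - b by rewrite subr_ge0.
have := ler_wpM2l a_sub_b_ge0 (ln_ge_pade ab_ge1); rewrite ln_div ?posrE //.
have -> : 2 * (a / b - 1) / (a / b + 1) = 2 * (a - b) / (a + b).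
  by field; rewrite !gt_eqF ?addr_gt0.
by rewrite mulrA mulrCA -expr2 mulrA.
Qed.

Lemma sum_sqr_le_sqr_sum_norm (I : finType) (d : I -> R) : \sum_i d i = 0 ->
  2 * \sum_i d i ^+ 2 <= (\sum_i `|d i|) ^+ 2.
Proof.
move=> sum_d0; set A : R := \sum_i `|d i|.
have d_le i : `|d i| <= A / 2.
  have : `|\sum_(l | l != i) d l| <= \sum_(l | l != i) `|d l| by apply: ler_norm_sum.
  move: sum_d0; rewrite /A (bigD1 i) //= (bigD1 i (P := predT)) //= => sum_d0.
  rewrite (_ : \sum_(l | l != i) d l = - d i) ?normrN; lra.
have : \sum_i d i ^+ 2 <= \sum_i `|d i| * (A / 2).
  apply: ler_sum => i _.
  by rewrite -real_normK ?num_real // expr2 ler_wpM2l.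
rewrite -mulr_suml -/A (_ : A ^+ 2 = 2 * (A * (A / 2))); first lra.
by field.
Qed.

Lemma sqr_sum_norm_le (I : finType) (d q : I -> R) : (forall i, 0 < q i) ->
  (\sum_i `|d i|) ^+ 2 <= (\sum_i q i) * \sum_i d i ^+ 2 / q i.
Proof.
move=> q_gt0; set A : R := \sum_i `|d i|; set S := \sum_i q i.
have [S_gt0 | S_le0] := ltP 0 S; last first.
  (* [S = 0] forces the index type to be empty *)
  have S0 : S = 0 by apply/le_anti; rewrite S_le0 sumr_ge0 // => i _; exact: ltW.
  rewrite /A big1 ?expr0n ?S0 ?mul0r // => i _.
  by have := q_gt0 i; rewrite (psumr_eq0P (fun i _ => ltW (q_gt0 i)) S0) ?ltxx.
(* completing the square in [|d i| / sqrt (q i)] against [A / S * sqrt (q i)] *)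
have term_ge i : 2 * (A / S) * `|d i| - (A / S) ^+ 2 * q i <= d i ^+ 2 / q i.
  rewrite -subr_ge0 (_ : _ - _ = (`|d i| - A / S * q i) ^+ 2 / q i).
    by rewrite divr_ge0 ?sqr_ge0 ?ltW.
  by rewrite -real_normK ?num_real //; field; rewrite !gt_eqF.
have : \sum_i (2 * (A / S) * `|d i| - (A / S) ^+ 2 * q i) <= \sum_i d i ^+ 2 / q i.
  by apply: ler_sum => i _; exact: term_ge.
rewrite sumrB -!mulr_sumr -/A -/S.
have -> : 2 * (A / S) * A - (A / S) ^+ 2 * S = A ^+ 2 / S by field; rewrite gt_eqF.
by rewrite ler_pdivrMr // mulrC.
Qed.

Lemma jeffreys_ge (I : finType) (p q : I -> R) :
  (forall i, 0 < p i) -> (forall i, 0 < q i) -> \sum_i p i = 1 -> \sum_i q i = 1 ->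
  2 * \sum_i (p i - q i) ^+ 2 <= \sum_i (p i - q i) * (ln (p i) - ln (q i)).
Proof.
move=> p_gt0 q_gt0 sum_p sum_q.
have pq_gt0 i : 0 < p i + q i by rewrite addr_gt0.
apply: le_trans (sum_sqr_le_sqr_sum_norm _) _; first by rewrite sumrB sum_p sum_q subrr.
apply: le_trans (sqr_sum_norm_le _ pq_gt0) _.
rewrite big_split /= sum_p sum_q mulr_sumr; apply: ler_sum => i _.
by rewrite mulrA; exact: lnB_mul_ge.
Qed.

Lemma softmax_sub_uniform_ge m (x : 'I_m -> R) :
  2 * \sum_j (expR (x j) / \sum_l expR (x l) - m%:R^-1) ^+ 2 <=
  \sum_j (expR (x j) / \sum_l expR (x l) - m%:R^-1) * x j.
Proof.
case: m x => [x | m x]; first by rewrite !big_ord0 mulr0.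
set Z := \sum_l expR (x l); set u : R := m.+1%:R^-1.
have Z_gt0 : 0 < Z.
  rewrite /Z (bigD1 ord0) //= ltr_pwDl ?expR_gt0 ?sumr_ge0 // => l _.
  exact/ltW/expR_gt0.
have sum_u : \sum_(j < m.+1) u = 1.
  by rewrite sumr_const card_ord -mulr_natl mulfV ?pnatr_eq0.
have sum_p : \sum_j expR (x j) / Z = 1 by rewrite -mulr_suml mulfV ?gt_eqF.
have ln_p j : ln (expR (x j) / Z) = x j - ln Z.
  by rewrite ln_div ?posrE ?expR_gt0 // expRK.
have <- : \sum_j (expR (x j) / Z - u) * (ln (expR (x j) / Z) - ln u) =
          \sum_j (expR (x j) / Z - u) * x j.
  under eq_bigr do rewrite ln_p -addrA mulrDr.
  by rewrite big_split /= -mulr_suml sumrB sum_p sum_u subrr mul0r addr0.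
apply: jeffreys_ge => // [j|]; first by rewrite divr_gt0 ?expR_gt0.
by rewrite invr_gt0 ltr0n.
Qed.
End SoftmaxInequality.

Section Rayleigh.
Local Open Scope sesquilinear_scope.

Lemma spectral_diag_eigenvalue (C : numClosedFieldType) k (A : 'M[C]_k) j :
  A \is normalmx -> eigenvalue A (spectral_diag A 0 j).
Proof.
move=> /orthomx_spectralP A_eq; set P := spectralmx A.
have P_unit : P \in unitmx by exact: spectral_unit.
apply/eigenvalueP; exists (row j P).
  rewrite -row_mul {1}A_eq !mulmxA mulmxV // mul1mx row_mul row_diag_mx.
  by rewrite -scalemxAl -rowE.
apply/eqP => Pj0.
have /matrixP/(_ 0 j) := mulmxK P_unit (delta_mx 0 j : 'rV_k).
by rewrite -rowE Pj0 mul0mx !mxE !eqxx => /eqP; rewrite eq_sym oner_eq0.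
Qed.

Lemma hermitian_rayleigh_le (C : numClosedFieldType) k (A : 'M[C]_k) (mu : C) :
  A \is hermsymmx -> (forall a, a \is Num.real -> eigenvalue A a -> a <= mu) ->
  forall z : 'rV[C]_k, (z *m A *m z^t*) 0 0 <= mu * (z *m z^t*) 0 0.
Proof.
move=> A_herm A_le_mu z.
have /orthomx_spectralP A_eq := hermitian_normalmx A_herm.
set P := spectralmx A in A_eq; set d := spectral_diag A in A_eq.
have P_unitary : P \is unitarymx by exact: spectral_unitarymx.
have d_le_mu j : d 0 j <= mu.
  apply: A_le_mu; first exact: mxOverP (hermitian_spectral_diag_real A_herm) 0 j.
  exact/spectral_diag_eigenvalue/hermitian_normalmx.
set y := z *m P^t*.
have zz_y : z *m z^t* = y *m y^t*.
  by rewrite trmx_mul map_mxM trmxCK mulmxA mulmxKtV.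
have zAz_y : z *m A *m z^t* = y *m diag_mx d *m y^t*.
  by rewrite {1}A_eq invmx_unitary // trmx_mul map_mxM trmxCK !mulmxA.
rewrite zz_y zAz_y mul_mx_diag !mxE mulr_sumr; apply: ler_sum => j _.
rewrite !mxE mulrAC [X in _ <= X]mulrC.
by apply: ler_wpM2l; [exact: mul_conjC_ge0 | exact: d_le_mu].
Qed.

Lemma symmetric_rayleigh_le (R : rcfType) k (W : 'M[R]_k) (mu : R) : W^T = W ->
  (forall a, eigenvalue W a -> a <= mu) ->
  forall x : 'cV[R]_k, (x^T *m W *m x) 0 0 <= mu * (x^T *m x) 0 0.
Proof.
move=> W_sym W_le_mu x.
pose toC := real_complex R.
have toC_real r : toC r \is Num.real by rewrite complex_real.
have W_herm : map_mx toC W \is hermsymmx.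
  apply: realsym_hermsym; last by apply/mxOverP => i j; rewrite mxE.
  by apply/is_hermitianmxP; rewrite expr0 scale1r map_mx_id // map_trmx W_sym.
have W_le_muC a : a \is Num.real -> eigenvalue (map_mx toC W) a -> a <= toC mu.
  by move=> /RRe_real <-; rewrite eigenvalue_map lecR; exact: W_le_mu.
have xC_adj : (map_mx toC x^T)^t* = map_mx toC x.
  by apply/matrixP => i j; rewrite !mxE conj_Creal.
have := hermitian_rayleigh_le W_herm W_le_muC (map_mx toC x^T).
by rewrite xC_adj -!map_mxM !mxE -rmorphM lecR.
Qed.
End Rayleigh.

Lemma dot_colE (R : pzSemiRingType) k (u v : 'cV[R]_k) :
  (u^T *m v) 0 0 = \sum_i u i 0 * v i 0.
Proof. by rewrite mxE; apply: eq_bigr => i _; rewrite mxE. Qed.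

Lemma dot_col_self_ge0 (R : realDomainType) k (g : 'cV[R]_k) : 0 <= (g^T *m g) 0 0.
Proof. by rewrite dot_colE sumr_ge0 // => i _; rewrite -expr2 sqr_ge0. Qed.

Lemma dot_col_self_eq0 (R : realDomainType) k (g : 'cV[R]_k) :
  (g^T *m g) 0 0 = 0 -> g = 0.
Proof.
rewrite dot_colE => /psumr_eq0P g2_eq0.
apply/matrixP => i j; rewrite ord1 mxE; apply/eqP.
by rewrite -sqrf_eq0 expr2 g2_eq0 // => l _; rewrite -expr2 sqr_ge0.
Qed.

Lemma rayleigh_shift_eq0 (R : rcfType) k (W : 'M[R]_k) (mu c : R)
    (g : 'cV[R]_k) :
  W^T = W -> (forall a, eigenvalue W a -> a <= mu) -> mu - 2 < c ->
  2 * (g^T *m g) 0 0 <= (g^T *m (W *m g - c *: g)) 0 0 -> g = 0.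
Proof.
move=> W_sym W_le_mu c_gt.
have -> : (g^T *m (W *m g - c *: g)) 0 0 = (g^T *m W *m g) 0 0 - c * (g^T *m g) 0 0.
  by rewrite mulmxBr -scalemxAr mulmxA [LHS]mxE [X in _ + X]mxE [X in - X]mxE.
have := symmetric_rayleigh_le W_sym W_le_mu g; have := dot_col_self_ge0 g.
set Q : R := (g^T *m g) 0 0 => Q_ge0 rayleigh g_ge.
by apply: dot_col_self_eq0; apply/le_anti; rewrite -/Q Q_ge0 andbT; nra.
Qed.

Section BlockSoftmax.
Variables (R : realType) (n m : nat).

Lemma sum_bidx (F : 'I_(n * m) -> R) : \sum_k F k = \sum_i \sum_j F (bidx i j).
Proof.
rewrite (reindex (fun p : 'I_n * 'I_m => mxvec_index p.1 p.2)) /=; last first.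
  have [g h1 h2] := curry_mxvec_bij n m; exists g => [[i j]|k] _ /=.
    exact: (h1 (i, j)).
  by have := h2 k; case: (g k) => i j /= ->.
by rewrite pair_big.
Qed.

Lemma fbarE (s : 'cV[R]_(n * m)) i j :
  fbar s (bidx i j) 0 =
  expR (s (bidx i j) 0) / \sum_l expR (s (bidx i l) 0) - m%:R^-1.
Proof.
rewrite /fbar /softmax !mxE /bidx mxvecE !mxE.
by under eq_bigr do rewrite mxE.
Qed.

Lemma fbar0 : fbar (0 : 'cV[R]_(n * m)) = 0.
Proof.
apply/matrixP => k l; rewrite ord1 {l}; case/mxvec_indexP: k => i j.
rewrite -/(bidx i j) fbarE !mxE expR0.
under eq_bigr do rewrite mxE expR0.
by rewrite sumr_const card_ord div1r subrr.
Qed.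

Lemma fbar_dot_ge (s : 'cV[R]_(n * m)) :
  2 * ((fbar s)^T *m fbar s) 0 0 <= ((fbar s)^T *m s) 0 0.
Proof.
rewrite !dot_colE !sum_bidx mulr_sumr; apply: ler_sum => i _.
under eq_bigr do rewrite fbarE.
under [X in _ <= X]eq_bigr do rewrite fbarE.
exact: softmax_sub_uniform_ge (fun j => s (bidx i j) 0).
Qed.
End BlockSoftmax.

Theorem proposition1 (R : realType) (n m : nat) (W : 'M[R]_(n * m))
    (lam : 'I_n -> 'I_n -> R) (alpha ga mu : R) :
  (0 < n)%N -> (1 < m)%N ->
  0 < alpha < 1 -> 0 < ga ->
  (* (S) diagonal blocks vanish *)
  (forall (i : 'I_n) (j l : 'I_m), W (bidx i j) (bidx i l) = 0) ->
  (* (A1) symmetry *)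
  W^T = W ->
  (* (A2) W_{i,k} 1_m = lam i k 1_m *)
  (forall (i k : 'I_n) (j : 'I_m), \sum_(l < m) W (bidx i j) (bidx k l) = lam i k) ->
  (* (A3) *)
  (forall i k : 'I_n, lam i k = lam k i) ->
  is_largest_eigenvalue W mu ->
  ga > alpha * (mu - 2) ->
  forall s a : 'cV[R]_(n * m),
    is_equilibrium W ga alpha s a <-> (s = 0 /\ a = 0).
Proof.
move=> _ _ /andP[alpha_gt0 _] _ _ W_sym _ _ [_ W_le_mu] ga_gt s a.
split=> [[Es Ea] | [-> ->]]; last first.
  by rewrite /is_equilibrium fbar0 mulmx0 !scaler0 !subr0.
set c := ga / alpha.
have aE : a = c *: fbar s.
  apply: (scalerI (lt0r_neq0 alpha_gt0)).
  move/eqP: Ea; rewrite subr_eq0 => /eqP <-.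
  by rewrite scalerA mulrCA divff ?mulr1 ?gt_eqF.
have sE : s = W *m fbar s - c *: fbar s.
  by rewrite -aE; move/eqP: Es; rewrite -addrA -opprD subr_eq0 => /eqP ->; rewrite addrK.
have c_gt : mu - 2 < c by rewrite /c ltr_pdivlMr // mulrC.
have fbar_s0 : fbar s = 0.
  apply: (rayleigh_shift_eq0 W_sym W_le_mu c_gt).
  by rewrite -sE; exact: fbar_dot_ge.
by rewrite sE aE fbar_s0 mulmx0 scaler0 subr0.
Qed.
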